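(* Let $A=(a_{i,j})\in\Theta_\vartriangle(n)$ have all diagonal entries zero, write $A=A^++A^-$ with $A^+$ (resp. $A^-$) the matrix keeping the entries $a_{i,j}$ with $i<j$ (resp. $i>j$) and zero elsewhere, and let $\lambda\in\mathbb N^n_\vartriangle$. Define $\mu,\nu\in\mathbb N^n_\vartriangle$ by $\mu_i=\lambda_i+\sum_{k<i}a_{i,k}$ and $\nu_i=\lambda_i+\sum_{k<i}a_{k,i}$. Then $$d_{A+\mathrm{diag}(\lambda)}=d_{A^++\mathrm{diag}(\mu)}+d_{A^-+\mathrm{diag}(\nu)}.$$
   Context: $\Theta_\vartriangle(n)$ is the set of matrices $B=(b_{i,j})_{i,j\in\mathbb Z}$ with $b_{i,j}\in\mathbb N$, $b_{i+n,j+n}=b_{i,j}$ and finitely many nonzero entries in each row. $\mathbb N^n_\vartriangle$ is the set of $n$-periodic sequences $(\lambda_i)_{i\in\mathbb Z}$ of nonnegative integers, and $\mathrm{diag}(\lambda)$ is the diagonal matrix with $(i,i)$ entry $\lambda_i$. For $B\in\Theta_\vartriangle(n)$, $d_B=\sum b_{i,j}b_{k,l}$, summing over all $i,j,k,l\in\mathbb Z$ with $1\le i\le n$, $k\le i$ and $j<l$. *)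

From mathcomp Require Import all_boot all_order all_algebra.
From mathcomp Require Import boolp classical_sets cardinality fsbigop.
Set Implicit Arguments. Unset Strict Implicit. Unset Printing Implicit Defensive.
Import Order.TTheory GRing.Theory Num.Theory.
Local Open Scope classical_set_scope.
Local Open Scope ring_scope.

Definition zmat := int -> int -> nat.

Definition in_Theta (n : nat) (B : zmat) : Prop :=
  (forall i j : int, B (i + n%:Z) (j + n%:Z) = B i j) /\
  (forall i : int, finite_set [set j : int | B i j != 0%N]).

Definition in_Nn (n : nat) (lam : int -> nat) : Prop :=
  forall i : int, lam (i + n%:Z) = lam i.

Definition zdiag (lam : int -> nat) : zmat :=
  fun i j => if i == j then lam i else 0%N.

Definition zmat_add (A B : zmat) : zmat := fun i j => (A i j + B i j)%N.

Definition upper_part (A : zmat) : zmat := fun i j => if i < j then A i j else 0%N.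
Definition lower_part (A : zmat) : zmat := fun i j => if j < i then A i j else 0%N.

Definition d_mat (n : nat) (B : zmat) : nat :=
  \big[addn/0%N]_(x \in [set x : int * int * int * int |
        let: (i, k, j, l) := x in [/\ (1 <= i)%R, (i <= n%:Z)%R, (k <= i)%R & (j < l)%R]])
    (let: (i, k, j, l) := x in (B i j * B k l)%N).

Definition mu_of (A : zmat) (lam : int -> nat) : int -> nat :=
  fun i => (lam i + \big[addn/0%N]_(k \in [set k : int | (k < i)%R]) A i k)%N.
Definition nu_of (A : zmat) (lam : int -> nat) : int -> nat :=
  fun i => (lam i + \big[addn/0%N]_(k \in [set k : int | (k < i)%R]) A k i)%N.

From mathcomp Require Import all_boot all_order all_algebra.
From mathcomp Require Import boolp classical_sets cardinality fsbigop.
From mathcomp Require Import zify.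
Import Order.TTheory GRing.Theory Num.Theory.
Local Open Scope classical_set_scope.
Local Open Scope ring_scope.

(* A periodic matrix with finite rows is banded, so d_B is a finite sum over a
   window, and it extends to the bilinear form d(X, Y) = sum x_ij y_kl over
   1 <= i <= n, k <= i, j < l.  Expanding B = A^+ + A^- + diag(lam), the order
   constraints kill every term with an upper or diagonal matrix on the left
   and a lower or diagonal one on the right.  The remaining
   cross term d(A^-, A^+) splits according to i < l or l <= i into
   d(diag(sum_{k<i} a_ik), A^+) + d(A^-, diag(sum_{k<i} a_ki)), which is exactly
   what replacing lam by mu and nu adds to the two sides. *)

Lemma fsbig_supp_seq {R : eqType} {idx : R} {op : Monoid.com_law idx}
    {T : choiceType} {P : pred T} {f : T -> R} (r : seq T) :
  uniq r -> (forall x, P x -> f x != idx -> x \in r) ->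
  \big[op/idx]_(x \in [set x | P x]) f x = \big[op/idx]_(x <- r | P x) f x.
Proof.
move=> r_uniq supp_r.
rewrite (fsbigE [seq x <- r | P x]) ?filter_uniq //.
- by rewrite big_filter_cond; apply: eq_bigl => x; rewrite mem_setE andbb.
- by move=> x /=; rewrite mem_filter => /andP[].
- move=> x Px; rewrite mem_filter Px /=.
  by case: (eqVneq (f x) idx) => // /(supp_r x Px) ->.
Qed.

Lemma sum_seq_delta {I : eqType} {s : seq I} {i : I} (F : I -> nat) :
  uniq s -> i \in s -> (\sum_(j <- s) (if i == j then F j else 0) = F i)%N.
Proof.
move=> s_uniq i_s; rewrite (bigD1_seq i) //= eqxx big1 ?addn0 // => j.
by rewrite eq_sym => /negbTE ->.
Qed.

Lemma finite_set_bounded (T : choiceType) (X : set T) (f : T -> nat) :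
  finite_set X -> exists m, forall x, X x -> (f x <= m)%N.
Proof.
move=> /finite_fsetP[Y ->]; exists (\sum_(y <- finmap.enum_fset Y) f y)%N => x Yx.
by rewrite (bigD1_seq x) ?finmap.fset_uniq //= leq_addr.
Qed.

Definition ziota (lo : int) (N : nat) : seq int := [seq lo + x%:Z | x <- iota 0 N].

Lemma ziota_uniq lo N : uniq (ziota lo N).
Proof. by rewrite map_inj_uniq ?iota_uniq // => x y /addrI []. Qed.

Lemma mem_ziota lo N y : (y \in ziota lo N) = (lo <= y < lo + N%:Z).
Proof.
apply/mapP/andP => [[x]|[lo_y y_lt]].
  by rewrite mem_iota add0n => /andP[_ x_lt] ->; split; lia.
by exists `|y - lo|%N; [rewrite mem_iota; apply/andP; split|]; lia.
Qed.

Definition banded (M : nat) (B : zmat) : Prop :=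
  forall i j, B i j != 0%N -> (`|i - j| <= M)%N.

Lemma banded_add {M : nat} {X Y : zmat} :
  banded M X -> banded M Y -> banded M (zmat_add X Y).
Proof.
rewrite /zmat_add => XM YM i j; case: (eqVneq (X i j) 0%N) => [->|/XM //].
exact: YM.
Qed.

Lemma banded_zdiag M f : banded M (zdiag f).
Proof. by move=> i j; rewrite /zdiag; case: (eqVneq i j) => [-> _|]; rewrite ?subrr. Qed.

Lemma banded_upper {M : nat} {X : zmat} : banded M X -> banded M (upper_part X).
Proof. by move=> XM i j; rewrite /upper_part; case: ifP => // _ /XM. Qed.

Lemma banded_lower {M : nat} {X : zmat} : banded M X -> banded M (lower_part X).
Proof. by move=> XM i j; rewrite /lower_part; case: ifP => // _ /XM. Qed.

Lemma periodic_shiftZ {n : nat} {B : zmat} :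
    (forall i j, B (i + n%:Z) (j + n%:Z) = B i j) ->
  forall (q : int) i j, B (i + q * n%:Z) (j + q * n%:Z) = B i j.
Proof.
move=> Bn; have Bnat (q : nat) i j : B (i + q%:Z * n%:Z) (j + q%:Z * n%:Z) = B i j.
  elim: q i j => [|q IH] i j; first by rewrite !mul0r !addr0.
  by rewrite -addn1 PoszD mulrDl mul1r !addrA Bn IH.
case=> q i j; first exact: Bnat.
by rewrite -(Bnat q.+1 (i + Negz q * n%:Z)); congr B; rewrite NegzE mulNr addrNK.
Qed.

Lemma rows_bounded {B : zmat} (s : seq int) :
    (forall i, finite_set [set j | B i j != 0%N]) ->
  exists M, forall i j, i \in s -> B i j != 0%N -> (`|i - j| <= M)%N.
Proof.
move=> Bfin; elim: s => [|i s [M BM]]; first by exists 0%N.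
have [m Bm] := @finite_set_bounded _ _ (fun j => `|i - j|%N) (Bfin i).
exists (maxn m M) => i' j; rewrite inE => /predU1P[-> /Bm|i's /(BM _ _ i's)]; lia.
Qed.

Lemma in_Theta_banded {n : nat} {B : zmat} : (0 < n)%N -> in_Theta n B -> exists M, banded M B.
Proof.
move=> n_gt0 [Bn Bfin]; have [M BM] := rows_bounded (ziota 1 n) Bfin.
exists M => a b Bab; set q := ((a - 1) %/ n%:Z)%Z.
set i0 := ((a - 1) %% n%:Z)%Z + 1.
have a_eq : a = i0 + q * n%:Z by have := divz_eq (a - 1) n%:Z; lia.
have i0_row : i0 \in ziota 1 n.
  have n_pos : n%:Z > 0 by rewrite ltz_nat.
  have := modz_ge0 (a - 1) (lt0r_neq0 n_pos); have := ltz_pmod (a - 1) n_pos.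
  by rewrite mem_ziota; lia.
have := BM i0 (b - q * n%:Z) i0_row.
rewrite -(periodic_shiftZ Bn q) subrK -a_eq => /(_ Bab); lia.
Qed.

Definition dterm (X Y : zmat) (i k j l : int) : nat :=
  if (k <= i) && (j < l) then (X i j * Y k l)%N else 0%N.

Definition dsum_row (s : seq int) (X Y : zmat) (i : int) : nat :=
  \sum_(k <- s) \sum_(j <- s) \sum_(l <- s) dterm X Y i k j l.

Definition dsum (n : nat) (s : seq int) (X Y : zmat) : nat :=
  \sum_(i <- ziota 1 n) dsum_row s X Y i.

(* [1 - 2M, n + M] contains every k, j, l of a nonzero term of d_B with 1 <= i <= n. *)
Definition window (n M : nat) : seq int := ziota (1 - (2 * M)%:Z) (n + 3 * M).

Lemma d_mat_window n {M : nat} {B : zmat} :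
  banded M B -> d_mat n B = dsum n (window n M) B B.
Proof.
move=> BM; rewrite /d_mat; set s := window n M.
pose P (x : int * int * int * int) :=
  let: (i, k, j, l) := x in [&& 1 <= i, i <= n%:Z, k <= i & j < l].
pose r := [seq (x, l) | x <- [seq (x, j) | x <- [seq (i, k) | i <- ziota 1 n, k <- s],
                                          j <- s], l <- s].
have r_uniq : uniq r.
  have pair_inj (T1 T2 : eqType) (u : seq T1) (v : seq T2) :
      {in [seq (x, y) | x <- u, y <- v] &, injective (uncurry pair)}.
    by move=> [? ?] [? ?].
  have s_uniq : uniq s := ziota_uniq _ _.
  by do 3![apply: allpairs_uniq => //]; exact: ziota_uniq.
have -> : [set x | let: (i, k, j, l) := x in [/\ 1 <= i, i <= n%:Z, k <= i & j < l]]
    = [set x | P x].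
  by apply/seteqP; split => -[[[i k] j] l] /= /and4P.
rewrite (fsbig_supp_seq r r_uniq) => [|[[[i k] j] l] /and4P[i_ge1 i_le k_le j_lt]].
  rewrite big_mkcond !big_allpairs; apply: eq_big_seq => i /[!mem_ziota] i_range.
  have [i_ge1 i_le_n] : 1 <= i /\ i <= n%:Z by lia.
  by do 3!apply: eq_bigr => ? _; rewrite /P /dterm i_ge1 i_le_n.
rewrite muln_eq0 negb_or => /andP[/BM ij_near /BM kl_near].
by do 3![apply: allpairs_f; last by rewrite mem_ziota; lia]; rewrite mem_ziota; lia.
Qed.

Lemma dsum_split n s (X Y X1 Y1 X2 Y2 : zmat) :
    (forall i k j l, dterm X Y i k j l = dterm X1 Y1 i k j l + dterm X2 Y2 i k j l)%N ->
  dsum n s X Y = (dsum n s X1 Y1 + dsum n s X2 Y2)%N.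
Proof.
move=> dtermD; rewrite /dsum /dsum_row -big_split; apply: eq_bigr => i _.
rewrite -big_split; apply: eq_bigr => k _; rewrite -big_split; apply: eq_bigr => j _.
by rewrite -big_split; apply: eq_bigr => l _.
Qed.

Lemma dsum_addl n s (X Y Z : zmat) :
  dsum n s (zmat_add X Y) Z = (dsum n s X Z + dsum n s Y Z)%N.
Proof. by apply: dsum_split => i k j l; rewrite /dterm /zmat_add; case: ifP; lia. Qed.

Lemma dsum_addr n s (X Y Z : zmat) :
  dsum n s X (zmat_add Y Z) = (dsum n s X Y + dsum n s X Z)%N.
Proof. by apply: dsum_split => i k j l; rewrite /dterm /zmat_add; case: ifP; lia. Qed.

Lemma dsum_eq0 n s (X Y : zmat) :
  (forall i k j l, dterm X Y i k j l = 0%N) -> dsum n s X Y = 0%N.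
Proof.
move=> dterm0; rewrite /dsum /dsum_row big1 // => i _.
by do 3![rewrite big1 // => ? _].
Qed.

Lemma dsum_zdiag_zdiag n s f g : dsum n s (zdiag f) (zdiag g) = 0%N.
Proof.
apply: dsum_eq0 => i k j l; rewrite /dterm /zdiag.
by case: (eqVneq i j) => [->|]; case: (eqVneq k l) => [->|]; case: ifP; lia.
Qed.

Lemma dsum_upper_lower n s (X Y : zmat) : dsum n s (upper_part X) (lower_part Y) = 0%N.
Proof.
apply: dsum_eq0 => i k j l; rewrite /dterm /upper_part /lower_part.
by case: (ltP i j); case: (ltP l k); case: ifP; lia.
Qed.

Lemma dsum_upper_zdiag n s (X : zmat) f : dsum n s (upper_part X) (zdiag f) = 0%N.
Proof.
apply: dsum_eq0 => i k j l; rewrite /dterm /upper_part /zdiag.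
by case: (ltP i j); case: (eqVneq k l) => [->|]; case: ifP; lia.
Qed.

Lemma dsum_zdiag_lower n s (X : zmat) f : dsum n s (zdiag f) (lower_part X) = 0%N.
Proof.
apply: dsum_eq0 => i k j l; rewrite /dterm /zdiag /lower_part.
by case: (eqVneq i j) => [->|]; case: (ltP l k); case: ifP; lia.
Qed.

Lemma upper_add_lower {A : zmat} :
  (forall i, A i i = 0%N) -> zmat_add (upper_part A) (lower_part A) = A.
Proof.
move=> A0; apply/funext => i; apply/funext => j.
rewrite /zmat_add /upper_part /lower_part.
by case: (ltgtP i j) => [||->]; rewrite ?A0 ?addn0.
Qed.

Lemma zdiag_add (f g : int -> nat) :
  zdiag (fun i => f i + g i)%N = zmat_add (zdiag f) (zdiag g).
Proof.
by apply/funext => i; apply/funext => j; rewrite /zmat_add /zdiag; case: eqP.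
Qed.

Lemma dterm_lower_upper (X Y : zmat) i k j l :
  dterm (lower_part X) (upper_part Y) i k j l =
  ((if (k <= i)%R && (i < l)%R then lower_part X i j * upper_part Y k l else 0)
   + (if (l <= i)%R && (j < l)%R then lower_part X i j * upper_part Y k l else 0))%N.
Proof.
rewrite /dterm /lower_part /upper_part.
by case: (ltP j i); case: (ltP k l); case: (leP k i); case: (ltP j l); case: (leP l i) => /=;
  lia.
Qed.

Lemma sum_dterm_zdiagl s (r : int -> nat) (Y : zmat) i k l : uniq s -> i \in s ->
  (\sum_(j <- s) dterm (zdiag r) Y i k j l
   = if (k <= i)%R && (i < l)%R then r i * Y k l else 0)%N.
Proof.
move=> s_uniq i_s; rewrite -[RHS](sum_seq_delta (fun _ => _) s_uniq i_s).
apply: eq_bigr => j _; rewrite /dterm /zdiag.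
by case: (eqVneq i j) => [<-|_]; case: ifP.
Qed.

Lemma sum_dterm_zdiagr s (X : zmat) (c : int -> nat) i k j : uniq s -> k \in s ->
  (\sum_(l <- s) dterm X (zdiag c) i k j l
   = if (k <= i)%R && (j < k)%R then X i j * c k else 0)%N.
Proof.
move=> s_uniq k_s; rewrite -[RHS](sum_seq_delta (fun _ => _) s_uniq k_s).
apply: eq_bigr => l _; rewrite /dterm /zdiag.
by case: (eqVneq k l) => [<-|_]; case: ifP; rewrite ?muln0.
Qed.

Definition rowsum_lower (A : zmat) (i : int) : nat :=
  \big[addn/0%N]_(k \in [set k : int | k < i]) A i k.

Definition colsum_upper (A : zmat) (i : int) : nat :=
  \big[addn/0%N]_(k \in [set k : int | k < i]) A k i.

Section BandedWindow.
Variables (n M : nat) (A : zmat).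
Hypothesis AM : banded M A.

Lemma rowsum_lower_window i : 1 <= i <= n%:Z ->
  rowsum_lower A i = (\sum_(j <- window n M) lower_part A i j)%N.
Proof.
move=> i_range; rewrite /rowsum_lower (fsbig_supp_seq (window n M)) ?ziota_uniq
  ?big_mkcond //.
by move=> j j_lt /AM; rewrite mem_ziota; lia.
Qed.

Lemma colsum_upper_window k : 1 - M%:Z <= k <= n%:Z ->
  colsum_upper A k = (\sum_(m <- window n M) upper_part A m k)%N.
Proof.
move=> k_range; rewrite /colsum_upper (fsbig_supp_seq (window n M)) ?ziota_uniq
  ?big_mkcond //.
by move=> m m_lt /AM; rewrite mem_ziota; lia.
Qed.

Lemma dsum_row_zdiag_rowsum i : 1 <= i <= n%:Z ->
  dsum_row (window n M) (zdiag (rowsum_lower A)) (upper_part A) i =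
  (\sum_(k <- window n M) \sum_(j <- window n M) \sum_(l <- window n M)
     if (k <= i)%R && (i < l)%R then lower_part A i j * upper_part A k l else 0)%N.
Proof.
move=> i_range; have i_w : i \in window n M by rewrite mem_ziota; lia.
rewrite /dsum_row; apply: eq_bigr => k _; rewrite exchange_big [RHS]exchange_big.
apply: eq_bigr => l _; rewrite sum_dterm_zdiagl ?ziota_uniq //.
rewrite (rowsum_lower_window _ i_range).
by case: ifP => _; [rewrite big_distrl | rewrite big1].
Qed.

Lemma dsum_row_zdiag_colsum i : 1 <= i <= n%:Z ->
  dsum_row (window n M) (lower_part A) (zdiag (colsum_upper A)) i =
  (\sum_(k <- window n M) \sum_(j <- window n M) \sum_(l <- window n M)
     if (l <= i)%R && (j < l)%R then lower_part A i j * upper_part A k l else 0)%N.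
Proof.
move=> i_range; set w := window n M.
pose F k j l := (if (l <= i)%R && (j < l)%R then lower_part A i j * upper_part A k l else 0)%N.
transitivity (\sum_(l <- w) \sum_(j <- w) \sum_(k <- w) F k j l)%N; last first.
  rewrite exchange_big; under eq_bigr do rewrite exchange_big.
  by rewrite exchange_big.
rewrite /dsum_row; apply: eq_big_seq => l l_w; apply: eq_bigr => j _.
rewrite sum_dterm_zdiagr ?ziota_uniq //; case: ifP => [/andP[l_le j_lt]|l_out]; last first.
  by rewrite big1 // => k _; rewrite /F l_out.
have [Lij0|Lij] := eqVneq (lower_part A i j) 0%N.
  by rewrite Lij0 big1 // => k _; rewrite /F Lij0; case: ifP.
have [j_lt_i /AM ij_near] : j < i /\ A i j != 0%N.
  by move: Lij; rewrite /lower_part; case: ifP.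
(* j < l <= i with |i - j| <= M keeps the column l inside the window. *)
rewrite colsum_upper_window; last by lia.
by rewrite big_distrr; apply: eq_bigr => k _; rewrite /F l_le j_lt.
Qed.

Lemma dsum_lower_upper :
  dsum n (window n M) (lower_part A) (upper_part A) =
  (dsum n (window n M) (zdiag (rowsum_lower A)) (upper_part A)
   + dsum n (window n M) (lower_part A) (zdiag (colsum_upper A)))%N.
Proof.
rewrite /dsum -big_split; apply: eq_big_seq => i /[!mem_ziota] i_range.
have {}i_range : 1 <= i <= n%:Z by lia.
rewrite dsum_row_zdiag_rowsum // dsum_row_zdiag_colsum // /dsum_row.
rewrite -big_split; apply: eq_bigr => k _; rewrite -big_split; apply: eq_bigr => j _.
by rewrite -big_split; apply: eq_bigr => l _; exact: dterm_lower_upper.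
Qed.

End BandedWindow.

Theorem lemma3p10p2 (n : nat) (A : zmat) (lam : int -> nat) :
  (0 < n)%N ->
  in_Theta n A ->
  (forall i : int, A i i = 0%N) ->
  in_Nn n lam ->
  d_mat n (zmat_add A (zdiag lam)) =
    (d_mat n (zmat_add (upper_part A) (zdiag (mu_of A lam))) +
     d_mat n (zmat_add (lower_part A) (zdiag (nu_of A lam))))%N.
Proof.
move=> n_gt0 A_Theta A0 _; have [M AM] := in_Theta_banded n_gt0 A_Theta.
rewrite (d_mat_window n (banded_add AM (banded_zdiag M lam))).
rewrite (d_mat_window n (banded_add (banded_upper AM) (banded_zdiag M _))).
rewrite (d_mat_window n (banded_add (banded_lower AM) (banded_zdiag M _))).
rewrite -[in LHS](upper_add_lower A0).
rewrite (zdiag_add lam (rowsum_lower A)) (zdiag_add lam (colsum_upper A)).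
rewrite !(dsum_addl, dsum_addr) !(dsum_zdiag_zdiag, dsum_upper_lower,
  dsum_upper_zdiag, dsum_zdiag_lower) dsum_lower_upper //.
lia.
Qed.
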